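(* Let $T$ be a code tree for $\mathcal S$ as in the context, with $1/2\le P_R<1$, let $N\ge 2$ and $k=\lceil \lg N\rceil$, and let $L^{(\mathrm I)}_N$ be the average code length of the Type-I AEDS with $N$ states built on $T$. Then $$L_T-L^{(\mathrm I)}_N=\frac{1-P_R^{N-1}}{1-P_R^{N}}\,P_R+\frac{1-P_R^{\,2^k-N}}{1-P_R^{N}}\,(1-P_R)-k(1-P_R),$$ so the reduction $\delta^{(\mathrm I)}_N(P_R):=[L_T-L^{(\mathrm I)}_N]_0$ equals the positive part of this expression, where $[u]_0=\max\{u,0\}$. In particular $\delta^{(\mathrm I)}_2(P_R)=\left[\frac{P_R^2+P_R-1}{1+P_R}\right]_0$, which is positive whenever $P_R>\omega^{(\mathrm I)}:=(\sqrt5-1)/2\approx0.6180$.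
   Context: Let $\mathcal S$ be a finite alphabet with $|\mathcal S|\ge 2$ and $p=\{p(s)\}_{s\in\mathcal S}$ a probability distribution with $p(s)>0$ for all $s$ (symbols are i.i.d. with law $p$). Let $\mathcal B=\{0,1\}^*$ be the set of finite binary words (including the empty word), $l(\beta)$ the length of $\beta$, and $\lg=\log_2$. An AEDS (asymmetric encoding–decoding scheme) with finite state set $\mathcal X$, $|\mathcal X|=N$, consists of maps $E_{\hat x}:\mathcal S\to\mathcal B$ and $F^-_{\hat x}:\mathcal S\to\mathcal X$ for each $\hat x\in\mathcal X$ such that, for every $x\in\mathcal X$, the words $E_{\hat x}(s)$ over all pairs $(\hat x,s)$ with $F^-_{\hat x}(s)=x$ are pairwise distinct and form a prefix-free set $\mathcal B^{(D)}_x$. (A sequence is encoded backward: from state $\hat x_t$ output $E_{\hat x_t}(s_t)$ and move to $F^-_{\hat x_t}(s_t)$.) The state chain is the Markov chain on $\mathcal X$ moving from $\hat x$ to $F^-_{\hat x}(s)$ with probability $p(s)$. For a stationary distribution $Q$ of this chain (unique when the chain is irreducible), the average code length is $L=\sum_{\hat x\in\mathcal X}\sum_{s\in\mathcal S}p(s)Q(\hat x)\,l(E_{\hat x}(s))$. Code tree: $T$ is a binary prefix-free code for $\mathcal S$ with codeword $c_T(s)$ of length $l_T(s)\ge1$, and $L_T=\sum_s p(s)l_T(s)$. $\mathcal S_R$ (resp. $\mathcal S_L$) is the set of symbols whose codeword starts in the right (resp. left) subtree of the root; both are assumed nonempty; $P_R=\sum_{s\in\mathcal S_R}p(s)$, $P_L=1-P_R$,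 labeled so that $P_R\ge 1/2$. For $s\in\mathcal S_R$ (resp. $\mathcal S_L$), $t_R(s)$ (resp. $t_L(s)$) is $c_T(s)$ with its first bit deleted. Type-I AEDS with $N\ge2$ states $\alpha_1,\dots,\alpha_N$ built on $T$: let $k=\lceil\lg N\rceil$ and let $\pi_1,\dots,\pi_N$ be a prefix-free set of binary words with $l(\pi_j)=k-1$ for $1\le j\le 2^k-N$ and $l(\pi_j)=k$ for $2^k-N<j\le N$. For $s\in\mathcal S_R$: $F^-_{\alpha_j}(s)=\alpha_{j+1}$, $E_{\alpha_j}(s)=t_R(s)$ for $1\le j\le N-1$, and $F^-_{\alpha_N}(s)=\alpha_1$, $E_{\alpha_N}(s)=0\,t_R(s)$. For $s\in\mathcal S_L$ and every $j$: $F^-_{\alpha_j}(s)=\alpha_1$, $E_{\alpha_j}(s)=1\,\pi_j\,t_L(s)$ (concatenation). Its state chain is irreducible and aperiodic, so $Q$ is unique. *)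

From mathcomp Require Import all_boot all_order all_algebra.
Set Implicit Arguments.
Unset Strict Implicit.
Unset Printing Implicit Defensive.
Import Order.TTheory GRing.Theory Num.Theory.
Local Open Scope ring_scope.

(* Binary words are [seq bool]; bit 0 = false, bit 1 = true. *)

(* A family of binary words indexed by a finite type is a prefix-free set of
   pairwise distinct words: no word is a prefix of a word with another index
   (this also forbids equal words at distinct indices). *)
Definition prefix_free (I : finType) (c : I -> seq bool) : Prop :=
  forall i j : I, i != j -> ~~ prefix (c i) (c j).

Definition ceil_lg (N : nat) : nat := up_log 2 N.

(* State chain of an AEDS with next-state map F : X -> S -> X : moves from x
   to F x s with probability p s.  Q is a stationary distribution. *)
Definition stationary (R : numDomainType) (S X : finType) (p : S -> R)
  (F : X -> S -> X) (Q : X -> R) : Prop :=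
  [/\ forall x, 0 <= Q x,
      \sum_(x : X) Q x = 1 &
      forall y : X, Q y = \sum_(x : X) \sum_(s : S | F x s == y) p s * Q x].

Definition avg_len (R : numDomainType) (S X : finType) (p : S -> R)
  (E : X -> S -> seq bool) (Q : X -> R) : R :=
  \sum_(x : X) \sum_(s : S) p s * Q x * (size (E x s))%:R.

(* c : S -> seq bool is the code of T, rb is the first bit of the right subtree. *)
Definition inR (S : finType) (c : S -> seq bool) (rb : bool) (s : S) : bool :=
  nth false (c s) 0 == rb.

Definition L_T (R : numDomainType) (S : finType) (p : S -> R) (c : S -> seq bool) : R :=
  \sum_(s : S) p s * (size (c s))%:R.

Definition P_R (R : numDomainType) (S : finType) (p : S -> R)
  (c : S -> seq bool) (rb : bool) : R :=
  \sum_(s : S | inR c rb s) p s.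

Definition tcut (S : finType) (c : S -> seq bool) (s : S) : seq bool := behead (c s).

(* State alpha_{j+1} is represented by j : 'I_N (0-based). *)
Definition first_state (N : nat) (j : 'I_N) : 'I_N := insubd j 0%N.

Definition typeI_F (S : finType) (c : S -> seq bool) (rb : bool) (N : nat)
  (j : 'I_N) (s : S) : 'I_N :=
  if inR c rb s then ordS j          (* alpha_j -> alpha_{j+1}, alpha_N -> alpha_1 *)
  else first_state j.

Definition typeI_E (S : finType) (c : S -> seq bool) (rb : bool) (N : nat)
  (pi : 'I_N -> seq bool) (j : 'I_N) (s : S) : seq bool :=
  if inR c rb s then
    (if (j < N.-1)%N then tcut c s else false :: tcut c s)
  else true :: (pi j ++ tcut c s).

From mathcomp Require Import all_boot all_order all_algebra.
From mathcomp Require Import ring lra zify.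
Import Order.TTheory GRing.Theory Num.Theory.
Set Implicit Arguments.
Unset Strict Implicit.
Unset Printing Implicit Defensive.
Local Open Scope ring_scope.

(* In the state chain a right-subtree symbol (total probability P = P_R)
   moves alpha_j to alpha_(j+1) cyclically and a left-subtree symbol resets
   to alpha_1, so the stationary law is geometric:
   Q(alpha_(j+1)) = P^j (1 - P) / (1 - P^N).  Compared with T, a right
   symbol saves its first bit in every state but alpha_N, and a left symbol
   costs |pi_j| extra bits; averaging these gains against the geometric law
   is a sum of geometric series, which gives the closed form. *)

Lemma mul1B_sum_exprs (R : comPzRingType) (x : R) n :
  (1 - x) * \sum_(i < n) x ^+ i = 1 - x ^+ n.
Proof. by rewrite -[1 - x ^+ n]opprB subrX1 -mulNr opprB. Qed.

Lemma sum_exprs_ltn (R : pzSemiRingType) (x : R) N n : (n <= N)%N ->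
  \sum_(i < N) x ^+ i * (i < n)%:R = \sum_(i < n) x ^+ i.
Proof.
move=> le_nN.
rewrite -(big_ord_narrow (F := fun i : 'I_N => x ^+ i)) // [RHS]big_mkcond.
by apply: eq_bigr => i _; case: ltnP; rewrite ?mulr1 ?mulr0.
Qed.

Definition typeI_dist (R : fieldType) (P : R) (N : nat) (x : 'I_N) : R :=
  P ^+ x * (1 - P) / (1 - P ^+ N).
Arguments typeI_dist {R} P N x.

(* [m = 2 ^ k - N] counts the states whose word [pi j] has length [k - 1]. *)
Definition typeI_reduction (R : fieldType) (P : R) (N m k : nat) : R :=
  (1 - P ^+ (N - 1)) / (1 - P ^+ N) * P
  + (1 - P ^+ m) / (1 - P ^+ N) * (1 - P) - k%:R * (1 - P).

Lemma sum_typeI_dist (R : fieldType) (P : R) N : P ^+ N != 1 ->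
  \sum_(x < N) typeI_dist P N x = 1.
Proof.
move=> PN_neq1; rewrite /typeI_dist -!big_distrl /= [_ * (1 - P)]mulrC.
by rewrite mul1B_sum_exprs divff // subr_eq0 eq_sym.
Qed.

Lemma sum_typeI_dist_gain (R : fieldType) (P : R) N m k :
  P ^+ N != 1 -> (m <= N)%N ->
  \sum_(x < N) typeI_dist P N x *
     ((x < N.-1)%:R * P - (k%:R - (x < m)%:R) * (1 - P))
  = typeI_reduction P N m k.
Proof.
move=> PN_neq1 le_mN; have DN_neq0 : 1 - P ^+ N != 0 by rewrite subr_eq0 eq_sym.
rewrite (eq_bigr (fun x : 'I_N =>
    (1 - P) / (1 - P ^+ N) * P * (P ^+ x * (x < N.-1)%:R)
    + (1 - P) / (1 - P ^+ N) * (1 - P) * (P ^+ x * (x < m)%:R)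
    + - (k%:R * (1 - P)) * typeI_dist P N x)); last first.
  by move=> x _; rewrite /typeI_dist; field.
rewrite big_split big_split -!big_distrr /= sum_typeI_dist //.
rewrite (sum_exprs_ltn _ (leq_pred N)) (sum_exprs_ltn _ le_mN).
rewrite /typeI_reduction subn1 -(mul1B_sum_exprs P N.-1) -(mul1B_sum_exprs P m).
by field.
Qed.

Lemma val_first_state N (x : 'I_N) : val (first_state x) = 0%N.
Proof. by rewrite val_insubd (leq_ltn_trans (leq0n x) (ltn_ord x)). Qed.

Lemma val_ord_pred N (x : 'I_N) :
  val (ord_pred x) = if val x == 0%N then N.-1 else (val x).-1.
Proof.
have := ltn_ord x; rewrite /=; case: eqP => [->|x_neq0] x_lt.
  by rewrite add0n modn_small // ltn_predL (leq_ltn_trans _ x_lt).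
rewrite -subn1 addnC -addnBA; last by lia.
by rewrite modnDl modn_small; lia.
Qed.

Section TypeIChain.

Variables (R : realFieldType) (S : finType) (p : S -> R).
Variables (c : S -> seq bool) (rb : bool).
Hypothesis p_sum1 : \sum_s p s = 1.

Local Notation P := (P_R p c rb).

Lemma sum_notinR : \sum_(s | ~~ inR c rb s) p s = 1 - P.
Proof. by rewrite -p_sum1 /P_R [in RHS](bigID (inR c rb)) /= addrC addrK. Qed.

Variable N : nat.
Local Notation F := (typeI_F c rb (N:=N)).

Lemma typeI_F_mass (x y : 'I_N) :
  \sum_(s | F x s == y) p s
    = (ordS x == y)%:R * P + (val y == 0%N)%:R * (1 - P).
Proof.
rewrite (bigID (inR c rb)) /= -sum_notinR.
rewrite (eq_bigl (fun s => (ordS x == y) && inR c rb s)); last first.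
  by move=> s; rewrite /typeI_F; case: (inR c rb s); rewrite ?andbT ?andbF.
rewrite [X in _ + X](eq_bigl (fun s => (val y == 0%N) && ~~ inR c rb s));
  last first.
  move=> s; rewrite /typeI_F; case: (inR c rb s); rewrite ?andbF // !andbT.
  by rewrite -val_eqE val_first_state eq_sym.
by case: (ordS x == y); case: (val y == 0%N);
  rewrite ?big_pred0_eq /= ?mul1r ?mul0r ?add0r ?addr0.
Qed.

Lemma typeI_inflow (Q : 'I_N -> R) (y : 'I_N) : \sum_x Q x = 1 ->
  \sum_x \sum_(s | F x s == y) p s * Q x
    = P * Q (ord_pred y) + (val y == 0%N)%:R * (1 - P).
Proof.
move=> Q_sum1; under eq_bigr do rewrite -big_distrl /= typeI_F_mass mulrDl.
rewrite big_split /= -big_distrr /= Q_sum1 mulr1; congr (_ + _).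
rewrite (bigD1 (ord_pred y)) //= ord_predK eqxx mul1r.
rewrite big1 ?addr0 1?mulrC // => x x_neq.
suff -> : (ordS x == y) = false by rewrite mul0r mul0r.
by apply/negbTE; apply: contra x_neq => /eqP <-; rewrite ordSK.
Qed.

Lemma stationary_typeI_dist : (0 < N)%N -> 0 <= P < 1 ->
  stationary p F (typeI_dist P N).
Proof.
move=> N_gt0 /andP[P_ge0 P_lt1].
have PN_lt1 : P ^+ N < 1 by rewrite exprn_ilt1 // -lt0n.
have dist_sum1 : \sum_x typeI_dist P N x = 1 by rewrite sum_typeI_dist ?lt_eqF.
split=> [x|//|y].
  by rewrite /typeI_dist !mulr_ge0 ?exprn_ge0 ?invr_ge0 ?subr_ge0
    ?(ltW P_lt1) ?(ltW PN_lt1).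
rewrite (typeI_inflow _ (Q := typeI_dist P N)) // /typeI_dist val_ord_pred.
case: eqP => [y0|y_neq0].
  have DN_neq0 : 1 - P ^+ N != 0 by rewrite subr_eq0 eq_sym lt_eqF.
  by rewrite y0 !mulrA -exprS prednK // mul1r; field.
by rewrite /= mulr0n mul0r addr0 !mulrA -exprS prednK // lt0n; apply/eqP.
Qed.

Lemma stationary_typeI_eq (Q : 'I_N -> R) : P ^+ N != 1 ->
  stationary p F Q -> Q =1 typeI_dist P N.
Proof.
move=> PN_neq1 [_ Q_sum1 Q_bal] x.
have Q_rec y : Q y = P * Q (ord_pred y) + (val y == 0%N)%:R * (1 - P).
  by rewrite Q_bal typeI_inflow.
have N_gt0 : (0 < N)%N := leq_ltn_trans (leq0n x) (ltn_ord x).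
pose x0 := Ordinal N_gt0.
have Q_pow (y : 'I_N) : Q y = P ^+ y * Q x0.
  case: y => j; elim: j => [|j IHj] lt_jN.
    by rewrite mul1r; congr Q; apply: val_inj.
  have pred_j : ord_pred (Ordinal lt_jN) = Ordinal (ltnW lt_jN).
    by apply: val_inj; rewrite val_ord_pred.
  by rewrite Q_rec pred_j IHj /= mulr0n mul0r addr0 exprS mulrA.
have Q_x0 : Q x0 * (1 - P ^+ N) = 1 - P.
  have := Q_rec x0; rewrite [Q (ord_pred _)]Q_pow val_ord_pred /=.
  by rewrite mulrA -exprS prednK // mul1r; lra.
have DN_neq0 : 1 - P ^+ N != 0 by rewrite subr_eq0 eq_sym.
by rewrite Q_pow /typeI_dist -Q_x0; field.
Qed.

Lemma typeI_len_gain (pi : 'I_N -> seq bool) x s : (0 < size (c s))%N ->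
  (size (c s))%:R - (size (typeI_E c rb pi x s))%:R
    = (if inR c rb s then (x < N.-1)%:R else - (size (pi x))%:R) :> R.
Proof.
rewrite /typeI_E /tcut; case: (c s) => // b t _ /=.
case: (inR c rb s) => /=; last by rewrite size_cat -!natr1 natrD; ring.
by case: ltnP => _ /=; rewrite ?subrr // -natr1; ring.
Qed.

Lemma L_T_sub_avg_len (pi : 'I_N -> seq bool) (Q : 'I_N -> R) :
  (forall s, 0 < size (c s))%N -> \sum_x Q x = 1 ->
  L_T p c - avg_len p (typeI_E c rb pi) Q
    = \sum_x Q x * ((x < N.-1)%:R * P - (size (pi x))%:R * (1 - P)).
Proof.
move=> c_nonempty Q_sum1.
have -> : L_T p c = \sum_x \sum_s p s * Q x * (size (c s))%:R.
  rewrite exchange_big /L_T; apply: eq_bigr => s _.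
  by under eq_bigr do rewrite mulrAC; rewrite -big_distrr /= Q_sum1 mulr1.
rewrite /avg_len -sumrB; apply: eq_bigr => x _.
rewrite -sumrB; under eq_bigr do rewrite -mulrBr typeI_len_gain //.
rewrite (bigID (inR c rb)) /=.
under eq_bigr => s inR_s do rewrite inR_s.
under [X in _ + X]eq_bigr => s notinR_s do rewrite (negbTE notinR_s).
by rewrite -!big_distrl /= sum_notinR -/(P_R p c rb); ring.
Qed.

Lemma typeI_reduction_eq (pi : 'I_N -> seq bool) (m k : nat) (Q : 'I_N -> R) :
  (forall s, 0 < size (c s))%N -> (0 < k)%N -> (m <= N)%N ->
  (forall x : 'I_N, size (pi x) = if (x < m)%N then k.-1 else k) ->
  P ^+ N != 1 -> stationary p F Q ->
  L_T p c - avg_len p (typeI_E c rb pi) Q = typeI_reduction P N m k.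
Proof.
move=> c_nonempty k_gt0 le_mN pi_size PN_neq1 Q_stat.
have pi_sizeR x : (size (pi x))%:R = k%:R - (x < m)%:R :> R.
  rewrite pi_size; case: ifP => _; last by rewrite subr0.
  by rewrite -[in RHS](prednK k_gt0) -natr1 addrK.
rewrite L_T_sub_avg_len //; last by case: Q_stat.
rewrite -(sum_typeI_dist_gain k PN_neq1 le_mN).
by apply: eq_bigr => x _; rewrite pi_sizeR (stationary_typeI_eq PN_neq1 Q_stat).
Qed.

End TypeIChain.

Lemma ceil_lg_gt0 N : (1 < N)%N -> (0 < ceil_lg N)%N.
Proof. by rewrite /ceil_lg up_log_gt0. Qed.

Lemma exp2_ceil_lg_le_double N : (1 < N)%N -> (2 ^ ceil_lg N <= N.*2)%N.
Proof.
move=> N_gt1; have := up_log_gtn (isT : (1 < 2)%N) N_gt1.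
rewrite -/(ceil_lg N) -(ltn_pmul2l (isT : (0 < 2)%N)) -expnS.
rewrite prednK ?ceil_lg_gt0 //.
by rewrite -muln2 mulnC => /ltnW.
Qed.

Lemma typeI_reduction2 (R : fieldType) (P : R) : 1 + P != 0 -> 1 - P != 0 ->
  typeI_reduction P 2 0 1 = (P ^+ 2 + P - 1) / (1 + P).
Proof.
move=> P1_neq0 P1_neq0'.
have sq_neq0 : 1 - P ^+ 2 != 0.
  by rewrite (_ : 1 - P ^+ 2 = (1 - P) * (1 + P)) ?mulf_neq0 //; ring.
by rewrite /typeI_reduction /=; field; rewrite P1_neq0 sq_neq0.
Qed.

Lemma typeI_reduction2_gt0 (R : rcfType) (P : R) :
  (Num.sqrt 5 - 1) / 2 < P -> 0 < (P ^+ 2 + P - 1) / (1 + P).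
Proof.
move=> gt_P; have sqrt5_ge0 : 0 <= Num.sqrt (5 : R) by rewrite sqrtr_ge0.
have sqrt5_sq : Num.sqrt (5 : R) ^+ 2 = 5 by rewrite sqr_sqrtr.
apply: divr_gt0; nra.
Qed.

Theorem theorem1 (R : rcfType) (S : finType) (p : S -> R)
  (c : S -> seq bool) (rb : bool) (N : nat) (pi : 'I_N -> seq bool) :
  (1 < #|S|)%N ->
  (forall s, 0 < p s) -> \sum_(s : S) p s = 1 ->
  (forall s, (0 < size (c s))%N) -> prefix_free c ->
  (exists s, inR c rb s) -> (exists s, ~~ inR c rb s) ->
  1 / 2 <= P_R p c rb -> P_R p c rb < 1 ->
  (2 <= N)%N ->
  prefix_free pi ->
  (forall j : 'I_N, size (pi j) =
     if (j < 2 ^ ceil_lg N - N)%N then (ceil_lg N).-1 else ceil_lg N) ->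
  let P := P_R p c rb in
  let k := ceil_lg N in
  [/\ exists Q : 'I_N -> R, stationary p (typeI_F c rb (N:=N)) Q,
      forall Q : 'I_N -> R, stationary p (typeI_F c rb (N:=N)) Q ->
        L_T p c - avg_len p (typeI_E c rb pi) Q =
          (1 - P ^+ (N - 1)) / (1 - P ^+ N) * P
          + (1 - P ^+ (2 ^ k - N)) / (1 - P ^+ N) * (1 - P)
          - k%:R * (1 - P),
      N = 2%N -> forall Q : 'I_N -> R, stationary p (typeI_F c rb (N:=N)) Q ->
        Num.max (L_T p c - avg_len p (typeI_E c rb pi) Q) 0 =
          Num.max ((P ^+ 2 + P - 1) / (1 + P)) 0 &
      (Num.sqrt 5 - 1) / 2 < P -> 0 < Num.max ((P ^+ 2 + P - 1) / (1 + P)) 0].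
Proof.
move=> _ _ p_sum1 c_nonempty _ _ _ P_ge_half P_lt1 N_ge2 _ pi_size P k.
have P_gt0 : 0 < P by apply: lt_le_trans P_ge_half; lra.
have PN_neq1 : P ^+ N != 1 by rewrite lt_eqF // exprn_ilt1 ?ltW // -lt0n ltnW.
have le_mN : (2 ^ k - N <= N)%N.
  by have := exp2_ceil_lg_le_double N_ge2; rewrite -/k -mul2n; lia.
have reduction Q : stationary p (typeI_F c rb (N:=N)) Q ->
    L_T p c - avg_len p (typeI_E c rb pi) Q = typeI_reduction P N (2 ^ k - N) k.
  exact: typeI_reduction_eq (ceil_lg_gt0 N_ge2) le_mN pi_size PN_neq1.
split=> [|| N2 Q Q_stat | /typeI_reduction2_gt0 red2_gt0].
- exists (typeI_dist P N).
  by apply: stationary_typeI_dist; rewrite ?(ltW P_gt0) // ltnW.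
- exact: reduction.
- have k1 : k = 1%N by rewrite /k N2 /ceil_lg up_lognn.
  by rewrite reduction // k1 N2 typeI_reduction2 ?gt_eqF ?subr_gt0 ?addr_gt0.
- by rewrite lt_max red2_gt0.
Qed.
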